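(* Let $(\mathcal C,\otimes,\mathbb I)$ be a monoidal category with pushouts, $(H,\Delta,\varepsilon)$ a coalgebra in $\mathcal C$, $(X,X\bullet H,\pi_X,\rho_X)$ a geometric partial $H$-comodule and $(Y,\delta)$ a global $H$-comodule. If $p:Y\to X$ is a morphism in $\mathcal C$ which is a morphism of geometric partial comodules $\mathcal I(Y)\to X$ (i.e. $\pi_X\circ(p\otimes H)\circ\delta=\rho_X\circ p$) and such that $X\bullet H$, with $\rho_X$ and $\pi_X$, is a pushout in $\mathcal C$ of $p:Y\to X$ and $(p\otimes H)\circ\delta:Y\to X\otimes H$, then $p$ is an epimorphism.
   Context: $\mathcal C$ is treated as strict monoidal; the identity of an object $X$ is also written $X$. A partial comodule datum is $(X,X\bullet H,\pi_X,\rho_X)$ with $\rho_X:X\to X\bullet H$ and $\pi_X:X\otimes H\to X\bullet H$ an epimorphism. For such a datum let: $(X\bullet H)\bullet H$ be the pushout of $\pi_X$ and $\rho_X\otimes H$, with coprojections $\rho_X\bullet H$ and $\pi_{X\bullet H}$; $X\bullet(H\otimes H)$ the pushout of $\pi_X$ and $X\otimes\Delta$, with coprojections $X\bullet\Delta$ and $\pi_{X,\Delta}:X\otimes H\otimes H\to X\bullet(H\otimes H)$; $X\bullet(H\bullet H)$ the pushout of $\pi_{X,\Delta}$ and $\pi_X\otimes H$, with coprojections $\pi'_X$ and $\pi'_{X,\Delta}$. A geometric partial $H$-comodule is a datum such that (GP1) there is $X\bullet\varepsilon:X\bullet H\to X$ with $(X\bullet\varepsilon)\circ\rho_X=\mathrm{id}_X$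 and $(X\bullet\varepsilon)\circ\pi_X=X\otimes\varepsilon$; (GP2) there is an isomorphism $\theta:X\bullet(H\bullet H)\to(X\bullet H)\bullet H$ with $\theta\circ\pi'_{X,\Delta}=\pi_{X\bullet H}$ and $(\rho_X\bullet H)\circ\rho_X=\theta\circ\pi'_X\circ(X\bullet\Delta)\circ\rho_X$. For a global comodule $(Y,\delta)$, $\mathcal I(Y)=(Y,Y\otimes H,\mathrm{id},\delta)$. *)

Set Implicit Arguments.
Set Universe Polymorphism.

(** * Monoidal categories (not assumed strict; associator and unitors are
    explicit natural isomorphisms satisfying pentagon and triangle).
    Equality of morphisms is Leibniz equality. *)
Record MonCat := {
  ob :> Type;
  hom : ob -> ob -> Type;
  idm : forall A, hom A A;
  comp : forall A B C, hom B C -> hom A B -> hom A C;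
  comp_idl : forall A B (f : hom A B), comp (idm B) f = f;
  comp_idr : forall A B (f : hom A B), comp f (idm A) = f;
  comp_assoc : forall A B C D (h : hom C D) (g : hom B C) (f : hom A B),
      comp h (comp g f) = comp (comp h g) f;
  tens : ob -> ob -> ob;
  tensm : forall A B C D, hom A B -> hom C D -> hom (tens A C) (tens B D);
  tensm_id : forall A B, tensm (idm A) (idm B) = idm (tens A B);
  tensm_comp : forall A B C A' B' C' (f : hom A B) (f' : hom B C)
      (g : hom A' B') (g' : hom B' C'),
      tensm (comp f' f) (comp g' g) = comp (tensm f' g') (tensm f g);
  munit : ob;
  assoc : forall A B C, hom (tens (tens A B) C) (tens A (tens B C));
  assoc_inv : forall A B C, hom (tens A (tens B C)) (tens (tens A B) C);
  assoc_iso1 : forall A B C, comp (assoc_inv A B C) (assoc A B C) = idm _;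
  assoc_iso2 : forall A B C, comp (assoc A B C) (assoc_inv A B C) = idm _;
  assoc_nat : forall A A' B B' C C' (f : hom A A') (g : hom B B') (h : hom C C'),
      comp (assoc A' B' C') (tensm (tensm f g) h)
      = comp (tensm f (tensm g h)) (assoc A B C);
  lunit : forall A, hom (tens munit A) A;
  lunit_inv : forall A, hom A (tens munit A);
  lunit_iso1 : forall A, comp (lunit_inv A) (lunit A) = idm _;
  lunit_iso2 : forall A, comp (lunit A) (lunit_inv A) = idm _;
  lunit_nat : forall A B (f : hom A B),
      comp (lunit B) (tensm (idm munit) f) = comp f (lunit A);
  runit : forall A, hom (tens A munit) A;
  runit_inv : forall A, hom A (tens A munit);
  runit_iso1 : forall A, comp (runit_inv A) (runit A) = idm _;
  runit_iso2 : forall A, comp (runit A) (runit_inv A) = idm _;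
  runit_nat : forall A B (f : hom A B),
      comp (runit B) (tensm f (idm munit)) = comp f (runit A);
  pentagon : forall A B C D,
      comp (assoc A B (tens C D)) (assoc (tens A B) C D)
      = comp (tensm (idm A) (assoc B C D))
             (comp (assoc A (tens B C) D) (tensm (assoc A B C) (idm D)));
  triangle : forall A B,
      comp (tensm (idm A) (lunit B)) (assoc A munit B)
      = tensm (runit A) (idm B)
}.

Arguments hom {m} _ _.
Arguments idm {m} _.
Arguments comp {m A B C} _ _.
Arguments tens {m} _ _.
Arguments tensm {m A B C D} _ _.
Arguments munit {m}.
Arguments assoc {m} _ _ _.
Arguments lunit {m} _.
Arguments runit {m} _.

Declare Scope cat_scope.
Delimit Scope cat_scope with cat.
Open Scope cat_scope.
Notation "g ∘ f" := (comp g f) (at level 40, left associativity) : cat_scope.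
Notation "A ⊗ B" := (tens A B) (at level 35, right associativity) : cat_scope.
Notation "f ⊗m g" := (tensm f g) (at level 35, right associativity) : cat_scope.

Section Basics.
Variable C : MonCat.

Definition epi {A B : C} (f : hom A B) : Prop :=
  forall (Z : C) (u v : hom B Z), u ∘ f = v ∘ f -> u = v.

Definition is_pushout {A B D P : C} (f : hom A B) (g : hom A D)
    (i1 : hom B P) (i2 : hom D P) : Prop :=
  i1 ∘ f = i2 ∘ g /\
  forall (Z : C) (u : hom B Z) (v : hom D Z), u ∘ f = v ∘ g ->
    exists w : hom P Z, (w ∘ i1 = u /\ w ∘ i2 = v) /\
      forall w' : hom P Z, w' ∘ i1 = u -> w' ∘ i2 = v -> w' = w.

Record pushout_of {A B D : C} (f : hom A B) (g : hom A D) := {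
  po_obj : C;
  po_inl : hom B po_obj;
  po_inr : hom D po_obj;
  po_spec : is_pushout f g po_inl po_inr
}.

Definition pushouts : Type :=
  forall (A B D : C) (f : hom A B) (g : hom A D), pushout_of f g.

Record coalgebra := {
  coH : C;
  coDelta : hom coH (coH ⊗ coH);
  coEps : hom coH munit;
  co_coassoc : assoc coH coH coH ∘ (coDelta ⊗m idm coH) ∘ coDelta
               = (idm coH ⊗m coDelta) ∘ coDelta;
  co_counitl : lunit coH ∘ (coEps ⊗m idm coH) ∘ coDelta = idm coH;
  co_counitr : runit coH ∘ (idm coH ⊗m coEps) ∘ coDelta = idm coH
}.

Definition is_comodule (H : coalgebra) (Y : C) (delta : hom Y (Y ⊗ coH H)) : Prop :=
  assoc Y (coH H) (coH H) ∘ (delta ⊗m idm (coH H)) ∘ delta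
    = (idm Y ⊗m coDelta H) ∘ delta
  /\ runit Y ∘ (idm Y ⊗m coEps H) ∘ delta = idm Y.

Record pc_datum (H : coalgebra) := {
  pcX : C;
  pcXH : C;
  pc_pi : hom (pcX ⊗ coH H) pcXH;
  pc_rho : hom pcX pcXH;
  pc_pi_epi : epi pc_pi
}.

Section Geometric.
Variable PO : pushouts.
Variable H : coalgebra.
Variable d : pc_datum H.

Let X := pcX d.
Let XH := pcXH d.
Let HH := coH H.
Let piX := pc_pi d.
Let rhoX := pc_rho d.

Definition GP1 : Prop :=
  exists Xeps : hom XH X,
    Xeps ∘ rhoX = idm X /\ Xeps ∘ piX = runit X ∘ (idm X ⊗m coEps H).

(** (X•H)•H : pushout of π_X and ρ_X ⊗ H, coprojections ρ_X•H, π_{X•H}. *)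
Definition po_XHH := PO _ _ _ piX (rhoX ⊗m idm HH).
(** X•(H⊗H) : pushout of π_X and X ⊗ Δ, coprojections X•Δ, π_{X,Δ}. *)
Definition po_XDelta := PO _ _ _ piX (idm X ⊗m coDelta H).
(** X•(H•H) : pushout of π_{X,Δ} and π_X ⊗ H (on (X⊗H)⊗H, via the
    associator), coprojections π'_X and π'_{X,Δ}. *)
Definition po_XHdotH :=
  PO _ _ _ (po_inr po_XDelta ∘ assoc X HH HH) (piX ⊗m idm HH).

Definition GP2 : Prop :=
  exists (theta : hom (po_obj po_XHdotH) (po_obj po_XHH))
         (theta_inv : hom (po_obj po_XHH) (po_obj po_XHdotH)),
    theta_inv ∘ theta = idm _ /\ theta ∘ theta_inv = idm _ /\
    theta ∘ po_inr po_XHdotH = po_inr po_XHH /\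
    po_inl po_XHH ∘ rhoX
      = theta ∘ po_inl po_XHdotH ∘ po_inl po_XDelta ∘ rhoX.

Definition geometric : Prop := GP1 /\ GP2.

End Geometric.
End Basics.

Arguments epi {C A B} f.
Arguments is_pushout {C A B D P} f g i1 i2.

(** The counit law of the global comodule splits [(p ⊗ H) ∘ δ] through
    [X ⊗ ε], i.e. [p] factors through the other leg of the pushout square.
    Two maps [u], [v] agreeing on [p] therefore induce two maps out of
    [X • H] that agree on the epimorphism [π_X]; they coincide, and so do
    their restrictions [u] and [v] along [ρ_X]. *)


Section Epimorphisms.
Variable C : MonCat.

Lemma runit_tensor_natl {A B E : C} (f : hom A B) (e : hom E munit) :
  runit B ∘ (idm B ⊗m e) ∘ (f ⊗m idm E) = f ∘ runit A ∘ (idm A ⊗m e).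
Proof.
  rewrite <- comp_assoc, <- tensm_comp, comp_idl, comp_idr.
  replace (f ⊗m e) with ((f ⊗m idm munit) ∘ (idm A ⊗m e))
    by now rewrite <- tensm_comp, comp_idl, comp_idr.
  now rewrite comp_assoc, runit_nat.
Qed.

Lemma comodule_counit_coaction (H : coalgebra C) {Y X : C}
    (delta : hom Y (Y ⊗ coH H)) (f : hom Y X) :
  is_comodule H Y delta ->
  runit X ∘ (idm X ⊗m coEps H) ∘ ((f ⊗m idm (coH H)) ∘ delta) = f.
Proof.
  intros [_ counit].
  rewrite comp_assoc, runit_tensor_natl, <- !comp_assoc.
  now rewrite (comp_assoc _ _ _ _ _ (runit Y)), counit, comp_idr.
Qed.

Lemma epi_pushout_factor {A B D P : C} (f : hom A B) (g : hom A D)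
    (i1 : hom B P) (i2 : hom D P) (r : hom D B) :
  is_pushout f g i1 i2 -> epi i2 -> r ∘ g = f -> epi f.
Proof.
  intros [_ mediate] i2_epi rg Z u v uv.
  assert (uf : u ∘ f = (u ∘ r) ∘ g) by now rewrite <- comp_assoc, rg.
  assert (vf : v ∘ f = (u ∘ r) ∘ g) by now rewrite <- uv.
  destruct (mediate Z u (u ∘ r) uf) as [w [[wu wr] _]].
  destruct (mediate Z v (u ∘ r) vf) as [w' [[w'v w'r] _]].
  assert (ww' : w = w') by (apply i2_epi; now rewrite wr, w'r).
  now rewrite <- wu, <- w'v, ww'.
Qed.

End Epimorphisms.

Theorem lemma3p2 (C : MonCat) (PO : pushouts C) (H : coalgebra C)
  (d : pc_datum H) (Hgeo : geometric PO d)
  (Y : C) (delta : hom Y (Y ⊗ coH H)) (Hcom : is_comodule H Y delta)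
  (p : hom Y (pcX d))
  (Hmor : pc_pi d ∘ (p ⊗m idm (coH H)) ∘ delta = pc_rho d ∘ p)
  (Hpo : is_pushout p ((p ⊗m idm (coH H)) ∘ delta) (pc_rho d) (pc_pi d)) :
  epi p.
Proof.
  eapply epi_pushout_factor.
  - exact Hpo.
  - apply pc_pi_epi.
  - now apply comodule_counit_coaction.
Qed.
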